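(* The topological entropy of any self-induced minimal Cantor system is either $0$ or $+\infty$.
   Context: A minimal Cantor system $(X,T)$ ($X$ a Cantor set, $T$ a homeomorphism with all orbits dense) is self-induced if there is a nonempty clopen proper subset $U\subsetneq X$ such that the induced system $(U,T_U)$, $T_U(x)=T^{r_U(x)}x$ with $r_U(x)=\inf\{n>0:T^nx\in U\}$, is topologically conjugate to $(X,T)$. *)

From HB Require Import structures.
From mathcomp Require Import all_boot all_order all_algebra.
From mathcomp Require Import all_classical all_reals all_analysis.
Set Implicit Arguments. Unset Strict Implicit. Unset Printing Implicit Defensive.
Import Order.TTheory GRing.Theory Num.Theory.
Local Open Scope classical_set_scope.
Local Open Scope ring_scope.

(** A Cantor set: a nonempty, metrizable (pseudometric + Hausdorff), compact,
    perfect, zero-dimensional space. *)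
Definition cantor_set {R : realType} (X : pseudoMetricType R) : Prop :=
  cantor_like X /\ [set: X] !=set0.

Definition is_homeo {X : topologicalType} (T : X -> X) : Prop :=
  continuous T /\ exists Ti : X -> X,
    [/\ continuous Ti, cancel T Ti & cancel Ti T].

Definition orbit_of {X : Type} (T Ti : X -> X) (x : X) : set X :=
  [set y | exists n : nat, y = iter n T x \/ y = iter n Ti x].

Definition minimal_system {X : topologicalType} (T : X -> X) : Prop :=
  continuous T /\ exists Ti : X -> X,
    [/\ continuous Ti, cancel T Ti, cancel Ti T &
        forall x, closure (orbit_of T Ti x) = [set: X]].

Definition first_return {X : Type} (T : X -> X) (U : set X) (x : X) (n : nat) : Prop :=
  (0 < n)%N /\ U (iter n T x) /\ forall m, (0 < m < n)%N -> ~ U (iter m T x).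

(** The induced system (U, T_U) is topologically conjugate to (X, T):
    there is a homeomorphism phi from the subspace U onto X (with inverse psi)
    such that phi (T_U x) = T (phi x) for x in U, where T_U x = T^{r_U(x)} x. *)
Definition induced_conjugate {X : topologicalType} (T : X -> X) (U : set X) : Prop :=
  exists phi psi : X -> X,
    {within U, continuous phi} /\
    continuous psi /\
    (forall y, U (psi y)) /\
    (forall x, U x -> psi (phi x) = x) /\
    (forall y, phi (psi y) = y) /\
    (forall x, U x -> exists n, first_return T U x n /\
                                phi (iter n T x) = T (phi x)).

Definition self_induced {X : topologicalType} (T : X -> X) : Prop :=
  exists U : set X, [/\ clopen U, U !=set0, U != [set: X] & induced_conjugate T U].

(** Topological entropy (Adler–Konheim–McAndrew), with finite open covers
    represented as sequences of open sets. *)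
Definition open_cover {X : topologicalType} (s : seq (set X)) : Prop :=
  (forall A, A \in s -> open A) /\ \bigcup_(A in [set A | A \in s]) A = [set: X].

Definition cover_join {X : Type} (s t : seq (set X)) : seq (set X) :=
  [seq A `&` B | A <- s, B <- t].

Fixpoint cover_iter_join {X : Type} (T : X -> X) (s : seq (set X)) (n : nat) : seq (set X) :=
  match n with
  | 0 => s
  | n'.+1 => cover_join s [seq T @^-1` A | A <- cover_iter_join T s n']
  end.

Definition cover_number {R : realType} {X : Type} (s : seq (set X)) : R :=
  inf [set (size t)%:R | t in [set t : seq (set X) |
         {subset t <= s} /\ \bigcup_(A in [set A | A \in t]) A = [set: X]]].

Definition cover_entropy {R : realType} {X : Type} (T : X -> X) (s : seq (set X)) : \bar R :=
  limn_esup (fun n : nat =>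
    ((ln (@cover_number R X (cover_iter_join T s n))) / (n.+1)%:R)%:E).

Definition top_entropy {R : realType} {X : topologicalType} (T : X -> X) : \bar R :=
  ereal_sup [set cover_entropy T s | s in [set s : seq (set X) | open_cover s]].

From HB Require Import structures.
From mathcomp Require Import all_boot all_order all_algebra.
From mathcomp Require Import all_classical all_reals all_analysis.
From mathcomp Require Import lra zify.
Set Implicit Arguments. Unset Strict Implicit. Unset Printing Implicit Defensive.
Import Order.TTheory GRing.Theory Num.Theory.
Local Open Scope classical_set_scope.
Local Open Scope ring_scope.

(* Let psi : X -> U conjugate T to the induced map T_U.  By minimality and compactness every
   orbit segment of some length PU meets U, and every one of some length PV meets the
   nonempty open set of those y for which psi y needs at least 2 steps to return to U.  A
   finite open cover g of X pulls back along psi to an open cover of X whose members fix the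
   return time k <= PU of psi y and the g-name of its first k steps.  A member of the n-fold
   join of the pulled-back cover thus fixes the g-name of psi y along n + 1 consecutive
   returns, i.e. along at least (n + 1)(PV + 1)/PV steps of T, and its images under T^k,
   k <= PU, cover X.  Hence h(T, g) <= PV/(PV + 1) h(T), so h(T) is either 0 or infinite. *)

Section Covers.
Variable X : Type.
Implicit Types (s t : seq (set X)) (T : X -> X).

Definition covers t : Prop := \bigcup_(A in [set A | A \in t]) A = [set: X].

Lemma coversP t : covers t <-> forall x, exists2 A, A \in t & A x.
Proof.
split=> [tX x|tX]; last by apply/seteqP; split=> // x _; have [A] := tX x; exists A.
by have : [set: X] x by []; rewrite -tX => -[A]; exists A.
Qed.

Definition cylinder T (f : nat -> set X) (m : nat) : set X :=
  [set x | forall j, (j <= m)%N -> f j (iter j T x)].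

Lemma cylinder0 T f : cylinder T f 0 = f 0%N.
Proof.
apply/seteqP; split=> x /=; first exact.
by move=> fx j; rewrite leqn0 => /eqP ->.
Qed.

Lemma cylinderS T f m :
  cylinder T f m.+1 = f 0%N `&` T @^-1` cylinder T (f \o succn) m.
Proof.
apply/seteqP; split=> x /=.
  by move=> fx; split=> [|j jm]; [exact: fx | rewrite -iterSr; exact: fx].
by move=> [f0x fx] [|j] // jm; rewrite iterSr; exact: fx.
Qed.

Lemma cover_iter_joinP T s m B :
  B \in cover_iter_join T s m <->
  exists2 f : nat -> set X, (forall j, (j <= m)%N -> f j \in s) & B = cylinder T f m.
Proof.
elim: m B => [|m IH] B /=.
  split=> [Bs|[f fs ->]]; last by rewrite cylinder0; exact: fs.
  by exists (fun=> B); rewrite ?cylinder0.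
split=> [/allpairsP [[A C] /= [As /mapP [D /IH [f fs ->] ->] ->]]|[f fs ->]].
  exists (fun j => if j is j'.+1 then f j' else A); last by rewrite cylinderS.
  by case=> // j; exact: fs.
rewrite cylinderS; apply/allpairsP.
exists (f 0%N, T @^-1` cylinder T (f \o succn) m); split=> //=; first exact: fs.
by apply: map_f; apply/IH; exists (f \o succn) => // j jm; exact: fs.
Qed.

Lemma cover_iter_join_covers T s m : covers s -> covers (cover_iter_join T s m).
Proof.
move=> /coversP sX; elim: m => [|m IH] //=; first exact/coversP.
apply/coversP => x; have [A As Ax] := sX x; have [C Cm Cx] := (coversP _).1 IH (T x).
exists (A `&` T @^-1` C) => //; apply/allpairsP; exists (A, T @^-1` C).
by split=> //=; exact: map_f.
Qed.

Lemma cover_number_le {R : realType} s t :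
  covers t -> (forall A, A \in t -> A !=set0 -> exists2 B, B \in s & A `<=` B) ->
  @cover_number R X s <= (size t)%:R.
Proof.
move=> /coversP tX ts; pose t' := [seq A <- t | `[< A !=set0 >]].
have [g gP] : {g : set X -> set X & forall A, A \in t' -> g A \in s /\ A `<=` g A}.
  apply: (@choice _ _ (fun A B => A \in t' -> B \in s /\ A `<=` B)) => A.
  case: (boolP (A \in t')) => [|_]; last by exists A.
  by rewrite mem_filter => /andP [/asboolP A0 /ts/(_ A0)] [B]; exists B.
apply: (@le_trans _ _ (size t')%:R); last by rewrite ler_nat size_filter count_size.
rewrite -(size_map g); apply: ge_inf; first by exists 0 => _ [u _ <-].
exists (map g t') => //; split; first by move=> _ /mapP [A /gP [gAs _] ->].
apply/coversP => x; have [A At Ax] := tX x.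
have At' : A \in t' by rewrite mem_filter At andbT; apply/asboolP; exists x.
by exists (g A); [exact: map_f | exact: (gP A At').2].
Qed.

Lemma cover_number_ge {R : realType} s (r : R) :
  covers s -> (forall t, {subset t <= s} -> covers t -> r <= (size t)%:R) ->
  r <= @cover_number R X s.
Proof.
move=> sX rt; apply: lb_le_inf; first by exists (size s)%:R; exists s => //; split.
by move=> _ [t [ts tX] <-]; exact: rt.
Qed.

Lemma cover_number_ge1 {R : realType} s (x0 : X) : covers s -> 1 <= @cover_number R X s.
Proof.
move=> sX; apply: cover_number_ge => // -[|A t] _ tX; last by rewrite ler1n.
by have [] := (coversP _).1 tX x0.
Qed.

Lemma cover_entropy_ge0 {R : realType} T s (x0 : X) :
  covers s -> (0 <= @cover_entropy R X T s)%E.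
Proof.
move=> sX; apply: le_ereal_inf_tmp => _ [V [N _ NV] <-]; apply: le_ereal_sup_tmp.
exists ((ln (@cover_number R X (cover_iter_join T s N)) / N.+1%:R)%:E).
  by exists N => //; apply: NV => /=.
rewrite lee_fin divr_ge0 // ln_ge0 //; apply: cover_number_ge1 x0 _.
exact: cover_iter_join_covers.
Qed.

End Covers.

Lemma cover_iter_join_open {X : topologicalType} (T : X -> X) (s : seq (set X)) m :
  continuous T -> (forall A, A \in s -> open A) ->
  forall B, B \in cover_iter_join T s m -> open B.
Proof.
move=> cT so; elim: m => [|m IH] B //=; first exact: so.
move=> /allpairsP [[A C] /= [As /mapP [D Dm ->] ->]].
by apply: openI; [exact: so | apply: open_comp => [x _|]; [exact: cT | exact: IH]].
Qed.

Section Limsup.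
Variable R : realType.

Lemma limn_esup_le_finP (u : nat -> R) (x : R) :
  (limn_esup (fun n => (u n)%:E) <= x%:E)%E <->
  forall e, 0 < e -> exists N, forall n, (N <= n)%N -> u n <= x + e.
Proof.
split=> [ux e e0|ux].
  have : (limn_esup (fun n => (u n)%:E) < (x + e)%:E)%E.
    by apply: le_lt_trans ux _; rewrite lte_fin ltrDl.
  move=> /ereal_inf_lt [_ [V [N _ NV] <-]] uV.
  exists N => n Nn; rewrite -lee_fin; apply/ltW/(le_lt_trans _ uV).
  by apply: ereal_sup_ubound; exists n => //; exact: NV.
apply/lee_addgt0Pr => e e0; have [N uN] := ux e e0.
apply: (@le_trans _ _ (ereal_sup ((fun n => (u n)%:E) @` [set n | (N <= n)%N]))).
  by apply: ereal_inf_lbound; exists [set n | (N <= n)%N] => //; exists N.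
by apply: ge_ereal_sup => _ [n Nn <-]; rewrite -EFinD lee_fin; exact: uN.
Qed.

Lemma limn_esup_affine_le (a : nat -> R) (alpha C : R) :
  (forall m, a m <= alpha * m.+1%:R + C) ->
  (limn_esup (fun m => (a m / m.+1%:R)%:E) <= alpha%:E)%E.
Proof.
move=> aC; apply/limn_esup_le_finP => e e0; exists (Num.truncn (C / e)) => m Mm.
rewrite ler_pdivrMr // mulrDl; apply: le_trans (aC m) _; rewrite lerD2l.
have : C / e < m.+1%:R.
  by apply: lt_le_trans (truncnS_gt _) _; rewrite ler_nat ltnS.
by rewrite ltr_pdivrMr // mulrC => /ltW.
Qed.

Lemma limn_esup_affine_bound (b : nat -> R) (H d : R) : 0 <= H -> 0 < d ->
  (limn_esup (fun n => (b n / n.+1%:R)%:E) <= H%:E)%E ->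
  exists B, forall n, b n <= B + (H + d) * n.+1%:R.
Proof.
move=> H0 d0 /limn_esup_le_finP/(_ d d0) [N bN].
have Hd : 0 <= H + d by rewrite addr_ge0 // ltW.
exists (\sum_(i < N) `|b i|) => n; case: (leqP N n) => [Nn|nN].
  apply: le_trans (_ : (H + d) * n.+1%:R <= _); last by rewrite lerDr sumr_ge0.
  by rewrite -ler_pdivrMr //; exact: bN.
have bB : b n <= \sum_(i < N) `|b i|.
  rewrite (bigD1 (Ordinal nN)) //=; apply: le_trans (ler_norm _) _.
  by rewrite lerDl sumr_ge0.
by apply: le_trans bB _; rewrite lerDl mulr_ge0.
Qed.

Lemma limn_esup_reindex_le (a b : nat -> R) (nu : nat -> nat) (c K L H : R) :
  0 <= c -> 0 <= H ->
  (forall m, a m <= L + b (nu m)) -> (forall m, (nu m).+1%:R <= c * m.+1%:R + K) ->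
  (limn_esup (fun n => (b n / n.+1%:R)%:E) <= H%:E)%E ->
  (limn_esup (fun m => (a m / m.+1%:R)%:E) <= (c * H)%:E)%E.
Proof.
move=> c0 H0 ab nuK bH; apply/lee_addgt0Pr => e e0.
have c1 : 0 < c + 1 by rewrite ltr_wpDl.
pose d := e / (c + 1); have d0 : 0 < d by rewrite divr_gt0.
have [B bB] := limn_esup_affine_bound H0 d0 bH.
apply: (@le_trans _ _ (c * (H + d))%:E).
  apply: limn_esup_affine_le (L + B + (H + d) * K) _ => m.
  have Hd : 0 <= H + d by rewrite addr_ge0 // ltW.
  have := ler_wpM2l Hd (nuK m); have := bB (nu m); have := ab m; nra.
rewrite -EFinD lee_fin mulrDr lerD2l /d mulrA ler_pdivrMr //; nra.
Qed.

End Limsup.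

Section NatSums.
Local Open Scope nat_scope.

Lemma sum_nat_ge_size (k : nat -> nat) m n :
  (forall i, m <= i < n -> 0 < k i) -> n - m <= \sum_(m <= i < n) k i.
Proof.
move=> kpos; rewrite -[n - m]muln1 -sum_nat_const_nat big_nat_cond.
by rewrite [X in _ <= X]big_nat_cond; apply: leq_sum => i; rewrite andbT; exact: kpos.
Qed.

Lemma sum_nat_block_ge (k : nat -> nat) a b i0 :
  (forall i, a <= i < b -> 0 < k i) -> a <= i0 < b -> 1 < k i0 ->
  (b - a).+1 <= \sum_(a <= i < b) k i.
Proof.
move=> kpos i0ab ki0.
rewrite (@big_cat_nat _ _ _ i0) /= ?(@big_ltn _ _ _ i0 b); try lia.
have := @sum_nat_ge_size k a i0 (fun i ai => kpos i ltac:(lia)).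
have := @sum_nat_ge_size k i0.+1 b (fun i ai => kpos i ltac:(lia)).
lia.
Qed.

Lemma sum_nat_windows_ge (k : nat -> nat) P q :
  (forall i, i < P * q -> 0 < k i) ->
  (forall r, r < q -> exists2 i, P * r <= i < P * r + P & 1 < k i) ->
  P * q + q <= \sum_(0 <= i < P * q) k i.
Proof.
elim: q => [|q IH] kpos kwin; first by rewrite muln0.
have IH' := IH (fun i iq => kpos i ltac:(lia)) (fun r rq => kwin r ltac:(lia)).
have [i0 i0q ki0] := kwin q (ltnSn q).
have -> : P * q.+1 = P * q + P by rewrite mulnS addnC.
rewrite (@big_cat_nat _ _ _ (P * q)) /=; try lia.
have := @sum_nat_block_ge k (P * q) (P * q + P) i0 (fun i iq => kpos i ltac:(lia)) i0q ki0.
lia.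
Qed.

Lemma exists_bracket (s : nat -> nat) n j :
  s 0 <= j -> j < s n.+1 -> exists2 i, i <= n & s i <= j < s i.+1.
Proof.
elim: n => [|n IH] s0j jn; first by exists 0 => //; rewrite s0j.
case: (ltnP j (s n.+1)) => [/(IH s0j) [i ni sij]|snj]; last by exists n.+1 => //; rewrite snj.
by exists i => //; exact: leqW.
Qed.

End NatSums.

Lemma iterK {X : Type} (T Ti : X -> X) n : cancel T Ti -> cancel (iter n T) (iter n Ti).
Proof. by move=> TK; elim: n => // n IH x; rewrite iterSr iterS TK IH. Qed.

Lemma iterK_subn {X : Type} (T Ti : X -> X) n m x : cancel T Ti -> (n <= m)%N ->
  iter n Ti (iter m T x) = iter (m - n) T x.
Proof. by move=> TK nm; rewrite -{1}(subnKC nm) iterD iterK. Qed.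

Lemma iter_continuous {X : topologicalType} (T : X -> X) n :
  continuous T -> continuous (iter n T).
Proof.
move=> cT; elim: n => [|n IH] x /=; first exact: cvg_id.
exact: continuous_comp (IH x) (cT _).
Qed.

Lemma minimal_bounded_visit {X : topologicalType} (T Ti : X -> X) (O : set X) :
  compact [set: X] -> continuous T -> continuous Ti -> cancel T Ti ->
  (forall x, closure (orbit_of T Ti x) = [set: X]) -> open O -> O !=set0 ->
  exists P, forall y, exists2 j, (j < P)%N & O (iter j T y).
Proof.
move=> cX cT cTi TK dense oO [w Ow].
pose visits n := \bigcup_(j in [set j | (j <= n)%N])
  (iter j T @^-1` O `|` iter j Ti @^-1` O).
have visits_open n : open (visits n).
  apply: bigcup_open => j _.
  by apply: openU; apply: open_comp => // x _; exact: iter_continuous.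
have [x _|N _ visitsN] := (compact_near_coveringP _).1 cX nat \oo (fun n y => visits n y).
  have [n Oxn] : exists n, O (iter n T x) \/ O (iter n Ti x).
    have : closure (orbit_of T Ti x) w by rewrite dense.
    move=> /(_ O (open_nbhs_nbhs (conj oO Ow))) [_ [[n [->|->]] Ox]].
      by exists n; left.
    by exists n; right.
  exists (visits n, [set i | (n <= i)%N]); first split=> /=.
  - by apply: open_nbhs_nbhs; split=> //; exists n => //=.
  - by exists n.
  by move=> [x' i] /= [[j /= jn Oj] ni]; exists j => //=; exact: leq_trans ni.
(* A two-sided visit within N steps of T^N y is a forward visit of y within 2N steps. *)
exists N.*2.+1 => y; have [j /= jN [Oj|Oj]] := visitsN N (leqnn N) (iter N T y) I.
  by exists (j + N)%N; [rewrite -addnn ltnS leq_add2r | rewrite iterD].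
exists (N - j)%N; last by rewrite -(iterK_subn _ TK jN).
by rewrite ltnS -addnn (leq_trans (leq_subr _ _)) ?leq_addr.
Qed.

Section FirstReturn.
Context {X : topologicalType} (T : X -> X) (U : set X).

Lemma first_return_le x n j :
  first_return T U x n -> (0 < j)%N -> U (iter j T x) -> (n <= j)%N.
Proof.
move=> [n0 [Un nU]] j0 Uj; rewrite leqNgt; apply/negP => jn.
by apply: (nU j) => //; rewrite j0 jn.
Qed.

Lemma first_return_uniq x n n' :
  first_return T U x n -> first_return T U x n' -> n = n'.
Proof.
move=> frn frn'; have [n0 [Un _]] := frn; have [n'0 [Un' _]] := frn'.
by apply/eqP; rewrite eqn_leq (first_return_le frn n'0 Un') (first_return_le frn' n0 Un).
Qed.

Lemma first_return_gt1 x n : first_return T U x n -> ~ U (T x) -> (1 < n)%N.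
Proof. by move=> [n0 [Un _]] nUTx; case: n n0 Un => [|[|n]]. Qed.

Lemma open_first_return n : continuous T -> open U -> closed U ->
  open [set x | first_return T U x n].
Proof.
move=> cT oU cU; rewrite openE /interior => x frx.
have : \forall y \near x, forall i : 'I_n.+1, U (iter i T y) = U (iter i T x).
  apply: filter_forall => i; have ciT := iter_continuous (n := i) cT; have {}ciT := ciT x.
  have [Ux|nUx] := pselect (U (iter i T x)).
    have UTx : nbhs x (iter i T @^-1` U) := ciT _ (open_nbhs_nbhs (conj oU Ux)).
    by apply: filterS UTx => y /= Uy; rewrite propeqE; split.
  have nUTx : nbhs x (iter i T @^-1` ~` U).
    exact: ciT _ (open_nbhs_nbhs (conj (closed_openC cU) nUx)).
  by apply: filterS nUTx => y /= nUy; rewrite propeqE; split=> [/nUy|/nUx].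
apply: filterS => y yx; have {}yx m : (m <= n)%N -> U (iter m T y) = U (iter m T x).
  by move=> mn; exact: (yx (Ordinal (mn : (m < n.+1)%N))).
move: frx => [n0 [Un nU]]; split=> //; split; first by rewrite yx.
by move=> m /andP [m0 mn]; rewrite yx ?(ltnW mn) //; apply: nU; rewrite m0.
Qed.

End FirstReturn.

Section InducedCover.
Context {R : realType} {X : topologicalType} (T Ti : X -> X) (U : set X) (psi : X -> X).
Hypotheses (cT : continuous T) (TiK : cancel Ti T) (cpsi : continuous psi)
  (oU : open U) (cU : closed U) (psiU : forall y, U (psi y))
  (psi_onto : forall x, U x -> exists y, psi y = x)
  (psiT : forall y, exists n, first_return T U (psi y) n /\ iter n T (psi y) = psi (T y)).

Lemma iter_first_return_psi y k :
  first_return T U (psi y) k -> iter k T (psi y) = psi (T y).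
Proof. by move=> frk; have [n [frn <-]] := psiT y; rewrite (first_return_uniq frk frn). Qed.

Lemma psi_iter_sum (k : nat -> nat) y n :
  (forall i, (i < n)%N -> first_return T U (psi (iter i T y)) (k i)) ->
  forall i, (i <= n)%N -> psi (iter i T y) = iter (\sum_(l < i) k l)%N T (psi y).
Proof.
move=> frk; elim=> [|i IH] iN; first by rewrite big_ord0.
rewrite big_ord_recr /= addnC iterD -IH ?(ltnW iN) // iter_first_return_psi //.
exact: frk.
Qed.

Lemma open_escape : open [set y | ~ U (T (psi y))].
Proof.
apply: (@open_comp _ _ (T \o psi) (~` U)); last exact: closed_openC.
by move=> y _; apply: continuous_comp; [exact: cpsi | exact: cT].
Qed.

Variable PU : nat.
Hypothesis visitU : forall x, exists2 j, (j < PU)%N & U (iter j T x).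

Lemma first_return_psi_le y k : first_return T U (psi y) k -> (k <= PU)%N.
Proof.
move=> frk; have [j jPU Uj] := visitU (T (psi y)).
by apply: leq_trans jPU; apply: (first_return_le frk) => //; rewrite iterSr.
Qed.

Lemma iter_psi_onto z : exists k y, (k <= PU)%N /\ z = iter k T (psi y).
Proof.
have [j jPU] := visitU (iter PU Ti z); rewrite (iterK_subn _ TiK (ltnW jPU)).
move=> /psi_onto [y psiy]; exists (PU - j)%N, y; split; first exact: leq_subr.
by rewrite psiy iterK.
Qed.

Lemma escape_nonempty : U != setT -> exists y, ~ U (T (psi y)).
Proof.
move=> /setTPn [z nUz]; apply: contrapT => noescape.
have UT x : U x -> U (T x).
  by move=> /psi_onto [y <-]; apply: contrapT => nU; apply: noescape; exists y.
have [k [y [_ zE]]] := iter_psi_onto z; apply: nUz; rewrite zE.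
by elim: k {zE} => [|k IH] /=; [exact: psiU | exact: UT].
Qed.

Definition induced_cover (g : seq (set X)) : seq (set X) :=
  flatten [seq [seq psi @^-1` ([set x | first_return T U x k] `&` D)
                | D <- cover_iter_join T g k.-1] | k <- iota 1 PU].

Lemma induced_cover_open g :
  (forall A, A \in g -> open A) -> forall e, e \in induced_cover g -> open e.
Proof.
move=> go e /flatten_mapP [k _ /mapP [D Dg ->]].
apply: open_comp => [y _|]; first exact: cpsi.
by apply: openI; [exact: open_first_return | exact: cover_iter_join_open Dg].
Qed.

Lemma induced_cover_covers g : covers g -> covers (induced_cover g).
Proof.
move=> gX; apply/coversP => y; have [k [frk _]] := psiT y.
have [D Dg Dy] := (coversP _).1 (cover_iter_join_covers T k.-1 gX) (psi y).
exists (psi @^-1` ([set x | first_return T U x k] `&` D)) => //.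
apply/flatten_mapP; exists k; last exact: map_f.
by have [k0 _] := frk; rewrite mem_iota k0 add1n ltnS (first_return_psi_le frk).
Qed.

Lemma induced_cover_memP g e : e \in induced_cover g ->
  exists k (f : nat -> set X), (forall l, (l < k)%N -> f l \in g) /\
    forall y, e y -> first_return T U (psi y) k /\
                     forall l, (l < k)%N -> f l (iter l T (psi y)).
Proof.
move=> /flatten_mapP [k]; rewrite mem_iota => /andP [k0 _].
move=> /mapP [D /cover_iter_joinP [f fg ->] ->].
exists k, f; split=> [l lk|y [frk Dy]]; first by apply: fg; rewrite -ltnS prednK.
by split=> // l lk; apply: Dy; rewrite -ltnS prednK.
Qed.

Lemma induced_cylinder_data g n A :
  A \in cover_iter_join T (induced_cover g) n ->
  exists (k : nat -> nat) (f : nat -> nat -> set X),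
    (forall i l, (i <= n)%N -> (l < k i)%N -> f i l \in g) /\
    forall y, A y -> forall i, (i <= n)%N ->
      first_return T U (psi (iter i T y)) (k i) /\
      forall l, (l < k i)%N -> f i l (iter l T (psi (iter i T y))).
Proof.
move=> /cover_iter_joinP [e eg ->].
have [p pP] : {p : nat -> nat * (nat -> set X) & forall i, (i <= n)%N ->
    (forall l, (l < (p i).1)%N -> (p i).2 l \in g) /\
    forall y, e i y -> first_return T U (psi y) (p i).1 /\
                       forall l, (l < (p i).1)%N -> (p i).2 l (iter l T (psi y))}.
  apply: (@choice _ _ (fun i p => (i <= n)%N ->
    (forall l, (l < p.1)%N -> p.2 l \in g) /\
    forall y, e i y -> first_return T U (psi y) p.1 /\
                       forall l, (l < p.1)%N -> p.2 l (iter l T (psi y)))) => i.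
  case: (leqP i n) => [iN|ni]; last by exists (0%N, fun=> set0).
  by have [k [f kf]] := induced_cover_memP (eg i iN); exists (k, f).
exists (fun i => (p i).1), (fun i => (p i).2).
by split=> [i l iN|y Ay i iN]; [exact: (pP i iN).1 | exact: (pP i iN).2 _ (Ay i iN)].
Qed.

Variable PV : nat.
Hypothesis visitV : forall y, exists2 j, (j < PV)%N & ~ U (T (psi (iter j T y))).

Lemma induced_cylinder_name g n q m A y0 :
  (n.+1 = PV * q)%N -> (m + PU < PV * q + q)%N ->
  A \in cover_iter_join T (induced_cover g) n -> A y0 ->
  forall j, (j <= m + PU)%N -> exists2 G, G \in g & forall y, A y -> G (iter j T (psi y)).
Proof.
move=> nq mq /induced_cylinder_data [k [f [fg Ak]]] Ay0 j jm.
pose s i := (\sum_(l < i) k l)%N.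
have psiE y i : A y -> (i <= n.+1)%N -> psi (iter i T y) = iter (s i) T (psi y).
  by move=> Ay; apply: psi_iter_sum => i' i'n; exact: (Ak y Ay i' i'n).1.
have long : (m + PU < s n.+1)%N.
  apply: leq_trans mq _; rewrite /s nq -(big_mkord xpredT).
  (* Each block of PV consecutive returns contains a return of length at least 2. *)
  apply: sum_nat_windows_ge => [i iq|r rq].
    by have [[]] := Ak y0 Ay0 i ltac:(lia).
  have rq' : (PV * r + PV <= PV * q)%N by rewrite addnC -mulnS leq_mul2l rq orbT.
  have [i iPV escapes] := visitV (iter (PV * r) T y0).
  exists (i + PV * r)%N; first lia.
  apply: first_return_gt1 (Ak y0 Ay0 _ _).1 _; first lia.
  by rewrite iterD.
have s0j : (s 0 <= j)%N by rewrite /s big_ord0.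
have [i iN /andP [sij jsi]] := exists_bracket s0j (leq_ltn_trans jm long).
have lk : (j - s i < k i)%N by move: sij jsi; rewrite /s big_ord_recr /=; lia.
exists (f i (j - s i)%N); first exact: fg.
move=> y Ay; have -> : iter j T (psi y) = iter (j - s i)%N T (iter (s i) T (psi y)).
  by rewrite -iterD subnK.
by rewrite -psiE ?leqW //; exact: (Ak y Ay i iN).2.
Qed.

Lemma induced_cylinder_image_sub g n q m A kk :
  (n.+1 = PV * q)%N -> (m + PU < PV * q + q)%N ->
  A \in cover_iter_join T (induced_cover g) n -> A !=set0 -> (kk <= PU)%N ->
  exists2 B, B \in cover_iter_join T g m & [set iter kk T (psi y) | y in A] `<=` B.
Proof.
move=> nq mq Ag [y0 Ay0] kkPU.
have [F FP] : {F : nat -> set X & forall j, (j <= m)%N ->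
    F j \in g /\ forall y, A y -> F j (iter (j + kk)%N T (psi y))}.
  apply: (@choice _ _ (fun j G => (j <= m)%N ->
    G \in g /\ forall y, A y -> G (iter (j + kk)%N T (psi y)))) => j.
  case: (leqP j m) => [jm|mj]; last by exists set0.
  have [|G Gg AG] := induced_cylinder_name nq mq Ag Ay0 (j := (j + kk)%N).
    by rewrite leq_add.
  by exists G.
exists (cylinder T F m); first by apply/cover_iter_joinP; exists F => // j /FP [].
by move=> _ [y Ay <-] j jm; rewrite -iterD; exact: (FP j jm).2.
Qed.

Lemma cover_number_join_le g n q m : covers g ->
  (n.+1 = PV * q)%N -> (m + PU < PV * q + q)%N ->
  @cover_number R X (cover_iter_join T g m) <=
  PU.+1%:R * @cover_number R X (cover_iter_join T (induced_cover g) n).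
Proof.
move=> gX nq mq; rewrite mulrC -ler_pdivrMr ?ltr0n //.
apply: cover_number_ge; first exact/cover_iter_join_covers/induced_cover_covers.
move=> t ts tX; rewrite ler_pdivrMr ?ltr0n // mulrC -natrM.
pose C := [seq [set iter kk T (psi y) | y in A] | kk <- iota 0 PU.+1, A <- t].
have -> : (PU.+1 * size t)%N = size C by rewrite size_allpairs size_iota.
apply: cover_number_le => [|_ /allpairsP [[kk A] [/[!mem_iota] /= kkPU At ->]] [_ [y Ay _]]].
  apply/coversP => z; have [kk [y [kkPU ->]]] := iter_psi_onto z.
  have [A At Ay] := (coversP _).1 tX y.
  exists [set iter kk T (psi y) | y in A]; last by exists y.
  by apply/allpairsP; exists (kk, A); split=> //; rewrite mem_iota ltnS.
rewrite add0n ltnS in kkPU.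
exact: induced_cylinder_image_sub nq mq (ts _ At) (ex_intro _ y Ay) kkPU.
Qed.

Lemma cover_entropy_le_induced g (H : R) (x0 : X) : covers g -> 0 <= H ->
  (@cover_entropy R X T (induced_cover g) <= H%:E)%E ->
  (@cover_entropy R X T g <= (PV%:R / PV.+1%:R * H)%:E)%E.
Proof.
move=> gX H0 eH; have [j jPV _] := visitV x0; have PV0 : (0 < PV)%N by lia.
pose q m := ((m + PU) %/ PV.+1).+1.
have nq m : ((PV * q m).-1.+1 = PV * q m)%N by rewrite prednK // muln_gt0 PV0.
apply: (limn_esup_reindex_le (nu := fun m => (PV * q m).-1)
  (K := PV%:R / PV.+1%:R * (PU + PV)%:R) (L := ln PU.+1%:R)) eH => //.
- move=> m; have mq : (m + PU < PV * q m + q m)%N.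
    by rewrite /q [X in (_ < X)%N]addnC -mulSn mulnC ltn_ceil.
  have N1 := cover_number_ge1 (R := R) x0 (cover_iter_join_covers T m gX).
  have N2 := cover_number_ge1 (R := R) x0
    (cover_iter_join_covers T (PV * q m).-1 (induced_cover_covers gX)).
  have N1p := lt_le_trans ltr01 N1; have N2p := lt_le_trans ltr01 N2.
  rewrite -lnM ?posrE ?ltr0n // ler_ln ?posrE ?mulr_gt0 ?ltr0n //.
  exact: cover_number_join_le gX (nq m) mq.
- move=> m; rewrite nq -mulrDr -natrD mulrAC ler_pdivlMr ?ltr0n // -!natrM ler_nat.
  have : (PV.+1 * q m <= m + PU + PV.+1)%N.
    by rewrite /q mulnS addnC leq_add2r mulnC leq_trunc_div.
  nia.
Qed.

Lemma top_entropy_eq0_or_pinfty (x0 : X) :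
  @top_entropy R X T = 0%E \/ @top_entropy R X T = +oo%E.
Proof.
have cover1 : open_cover [:: [set: X]].
  split=> [A|]; first by rewrite mem_seq1 => /eqP ->; exact: openT.
  by apply/coversP => x; exists [set: X]; rewrite ?mem_seq1.
have h0 : (0 <= @top_entropy R X T)%E.
  apply: le_trans (cover_entropy_ge0 T x0 cover1.2) _.
  by apply: ereal_sup_ubound; exists [:: [set: X]].
case eh : (top_entropy T) => [h| |]; [left | by right | by rewrite eh in h0].
have h0' : 0 <= h by rewrite -lee_fin -eh.
have hc : h <= PV%:R / PV.+1%:R * h.
  rewrite -lee_fin -eh; apply: ge_ereal_sup => _ [s [so sX] <-].
  have eo : open_cover (induced_cover s).
    by split; [exact: induced_cover_open so | exact: induced_cover_covers sX].
  apply: cover_entropy_le_induced x0 sX h0' _; rewrite -eh.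
  by apply: ereal_sup_ubound; exists (induced_cover s).
have c1 : PV%:R / PV.+1%:R < 1 :> R by rewrite ltr_pdivrMr ?ltr0n // mul1r ltr_nat.
move: (PV%:R / _) hc c1 => c hc c1.
by congr EFin; apply/eqP; rewrite eq_le h0' andbT; nra.
Qed.

End InducedCover.

Local Open Scope ereal_scope.

Theorem mainTheorem7 (R : realType) (X : pseudoMetricType R) (T : X -> X) :
  cantor_set X -> minimal_system T -> self_induced T ->
  @top_entropy R X T = 0 \/ @top_entropy R X T = +oo.
Proof.
move=> [[_ cX _ _] _] [cT [Ti [cTi TK TiK dense]]].
move=> [U [[oU cU] [x0 Ux0] UX [phi [psi [_ [cpsi [psiU [psiphi [phipsi phiT]]]]]]]]].
have psi_onto x : U x -> exists y, psi y = x by move=> Ux; exists (phi x); exact: psiphi.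
have psiT y : exists n, first_return T U (psi y) n /\ iter n T (psi y) = psi (T y).
  have [n [frn]] := phiT (psi y) (psiU y); rewrite phipsi => nE.
  by exists n; split=> //; rewrite -nE psiphi //; case: frn => _ [].
have [PU visitU] := minimal_bounded_visit cX cT cTi TK dense oU (ex_intro _ x0 Ux0).
have escape := escape_nonempty TiK psiU psi_onto visitU UX.
have [PV visitV] := minimal_bounded_visit cX cT cTi TK dense (open_escape cT cpsi cU) escape.
exact: (top_entropy_eq0_or_pinfty (R := R) cT TiK cpsi oU cU psi_onto psiT visitU visitV x0).
Qed.
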